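(* Let $P$ be a rooted tree poset with $n$ elements and let $L$ be a labeling of $P$ such that $L^{-1}(n)$ is the maximal element (root) of $P$. Let $b$ be the highest branch vertex of $P$, let $c_1<_P\cdots<_P c_k$ be the $L$-golden elements $x$ with $x\ge_P b$ (these form a chain, and $c_k$ is the root), and let $\mathcal M$ be the set of maximal $L$-golden rooted subtrees of $P$ whose roots are less than $b$. Then \[|\partial^{-1}(L)|=2^{k-1}+\sum_{T\in\mathcal M}\sum_{x\in T}2^{\omega_T(x)+k-2},\] where $\omega_T(x)$ is the number of elements on the path $x=p_1\lessdot p_2\lessdot\cdots\lessdot p_{\omega_T(x)}$ from $x$ to the root of $T$ in the Hasse diagram of the induced subposet $T$.
   Context: A labeling of an $n$-element poset $P$ is a bijection $L:P\to[n]$; promotion $\partial$ is defined as follows: for non-maximal $x$, the $L$-successor of $x$ is the element greater than $x$ with minimal label; the promotion chain is $v_1=L^{-1}(1)$, $v_{i+1}$ the $L$-successor of $v_i$, ending at the first maximal element $v_m$; $\partial(L)(x)=L(x)-1$ for $x$ off the chain, $\partial(L)(v_i)=L(v_{i+1})-1$ for $i<m$, $\partial(L)(v_m)=n$. A rooted tree poset is a connected poset in which every element is covered by at most one element (so it has a unique maximal element, the root). An element $x$ is $L$-golden if $L(y)>L(x)$ for all $y>_P x$; a set is $L$-golden if all its elements are. A subset of $P$ is a subtree if its induced subposet is a rooted tree poset. The highest branch vertex $b$ is the largest element of $P$ that covers more than one element (if no element covers more than one element, i.e. $P$ is a chain, take $b$ to be the minimum of $P$); the set $\{x: x\ge_P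 b\}$ is a chain. Here $\mathcal M$ consists of the maximal subsets $T$ of $\{x\in P: x \text{ is } L\text{-golden},\ x<_P b\}$ whose induced subposet is a rooted tree (equivalently, the connected components of the induced subposet on that set). *)

From HB Require Import structures.
From mathcomp Require Import all_boot all_order.
Set Implicit Arguments.
Unset Strict Implicit.
Unset Printing Implicit Defensive.
Import Order.TTheory.

Section PosetDefs.
Context {d : Order.disp_t} {P : finPOrderType d}.

Definition covers_in (S : {set P}) (x y : P) : bool :=
  [&& x \in S, y \in S, (x < y)%O & ~~ [exists z, [&& z \in S, (x < z)%O & (z < y)%O]]].

Definition comp_rel_in (S : {set P}) : rel P :=
  fun x y => [&& x \in S, y \in S & (x >=< y)%O].

Definition is_rooted_tree_on (S : {set P}) : bool :=
  [&& S != set0,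
      [forall x in S, forall y in S, connect (comp_rel_in S) x y] &
      [forall x, forall y1, forall y2,
          covers_in S x y1 ==> covers_in S x y2 ==> (y1 == y2)]].

Definition is_rooted_tree : bool := is_rooted_tree_on setT.

Definition is_labeling (L : P -> nat) : Prop :=
  injective L /\ forall x, 1 <= L x <= #|P|.

(* L-successor of x: the element greater than x with minimal label
   (returns x itself when x is maximal) *)
Definition Lsucc (L : P -> nat) (x : P) : P :=
  odflt x [pick y | (x < y)%O && [forall z, (x < z)%O ==> (L y <= L z)]].

Definition is_maximal (x : P) : bool := [forall y, ~~ (x < y)%O].

(* the promotion chain v_1 = L^{-1}(1), v_{i+1} = Lsucc v_i, ending at the
   first maximal element (iterating past it stays put) *)
Definition promotion_chain (L : P -> nat) : {set P} :=
  if [pick x | L x == 1] is Some v1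
  then [set iter (nat_of_ord i) (Lsucc L) v1 | i : 'I_#|P|]
  else set0.

Definition promotion (L : P -> nat) (x : P) : nat :=
  if x \in promotion_chain L then
    (if is_maximal x then #|P| else (L (Lsucc L x)).-1)
  else (L x).-1.

Definition labelings : {set {ffun P -> 'I_(#|P|).+1}} :=
  [set L : {ffun P -> 'I_(#|P|).+1} | injectiveb L && [forall x, 0 < nat_of_ord (L x)]].

Definition promotion_preimage_card (L : P -> nat) : nat :=
  #|[set L' in labelings |
      [forall x, promotion (fun y => nat_of_ord (L' y)) x == L x]]|.

Definition golden (L : P -> nat) (x : P) : bool :=
  [forall y, (x < y)%O ==> (L x < L y)].

Definition is_branch (x : P) : bool :=
  1 < #|[set y | covers_in setT y x]|.

(* b is the highest branch vertex (the minimum of P if P is a chain) *)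
Definition is_highest_branch_vertex (b : P) : bool :=
  if [exists x, is_branch x]
  then is_branch b && [forall x, is_branch x ==> (x <= b)%O]
  else [forall x, (b <= x)%O].

Definition golden_below (L : P -> nat) (b : P) : {set P} :=
  [set x | golden L x & (x < b)%O].

Definition maxGoldenSubtrees (L : P -> nat) (b : P) : {set {set P}} :=
  [set T | maxset (fun S : {set P} =>
                     (S \subset golden_below L b) && is_rooted_tree_on S) T].

(* ω_T(x): number of elements on the Hasse-diagram path from x to the root
   of T, i.e. the number of elements of T that are >= x *)
Definition omega (T : {set P}) (x : P) : nat := #|[set y in T | (x <= y)%O]|.

End PosetDefs.

(* Let r be the root. A labeling L' with promotion L is determined by its
   promotion chain C = {c_1 < ... < c_m = r}: L'(c_1) = 1, L'(c_(i+1)) = L(c_i) + 1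
   and L'(x) = L(x) + 1 off C. The chains that occur are exactly the chains of
   L-golden elements containing r, so |promotion^-1(L)| counts these. Since
   everything above an element x of a rooted tree is a chain, the chains with
   least element x are x |: (r |: D) for an arbitrary set D of golden elements
   strictly between x and r; hence the count is the sum over golden x of
   2 ^ (g(x) - 1), g(x) the number of golden elements above x. Every element is
   comparable with b: the golden elements above b form a chain of size k, which
   contributes 2 ^ (k - 1), and a golden x < b lies in exactly one T in M, which
   contains every golden y with x <= y < b, so that g(x) - 1 = omega_T(x) + k - 2. *)

From HB Require Import structures.
From mathcomp Require Import all_boot all_order zify.
Import Order.TTheory.
Set Implicit Arguments. Unset Strict Implicit. Unset Printing Implicit Defensive.

Section FinPoset.
Context {d : Order.disp_t} {P : finPOrderType d}.
Implicit Types (x y z : P) (C S : {set P}) (f g : P -> nat).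

Lemma labeling_onto f : injective f -> (forall x, 1 <= f x <= #|P|) ->
  forall v, 1 <= v <= #|P| -> exists x, f x = v.
Proof.
move=> finj fb v hv.
have u : uniq (map f (enum P)) by rewrite map_inj_uniq ?enum_uniq.
have sub : {subset map f (enum P) <= iota 1 #|P|}.
  by move=> y /mapP[x _ ->]; rewrite mem_iota; have := fb x; lia.
have hs : size (iota 1 #|P|) <= size (map f (enum P)) by rewrite size_iota size_map -cardE.
have [_ eqs] := uniq_min_size u sub hs.
have : v \in iota 1 #|P| by rewrite mem_iota; lia.
by rewrite -eqs => /mapP[x _ ->]; exists x.
Qed.

Lemma card_below_lt x y : (x < y)%O ->
  #|[set u | (u < x)%O]| < #|[set u | (u < y)%O]|.
Proof.
move=> xy; apply: proper_card; apply/properP; split.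
  by apply/subsetP => u; rewrite !inE => /lt_trans; apply.
by exists x; rewrite !inE ?ltxx.
Qed.

Lemma card_above_lt x y : (x < y)%O ->
  #|[set u | (y < u)%O]| < #|[set u | (x < u)%O]|.
Proof.
move=> xy; apply: proper_card; apply/properP; split.
  by apply/subsetP => u; rewrite !inE; apply: lt_trans.
by exists y; rewrite !inE ?ltxx.
Qed.

Lemma ex_minimal (p : pred P) x : p x ->
  exists2 m, p m & forall y, p y -> ~~ (y < m)%O.
Proof.
move=> px; have [m pm mmin] := arg_minnP (fun c => #|[set u | (u < c)%O]|) px.
by exists m => // y /mmin; apply: contraTN => /card_below_lt; rewrite -ltnNge.
Qed.

Lemma ex_maximal (p : pred P) x : p x ->
  exists2 m, p m & forall y, p y -> ~~ (m < y)%O.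
Proof.
move=> px; have [m pm mmax] := arg_minnP (fun c => #|[set u | (c < u)%O]|) px.
by exists m => // y /mmax; apply: contraTN => /card_above_lt; rewrite -ltnNge.
Qed.

Lemma cover_above x y : (x < y)%O -> exists2 c, covers_in setT x c & (c <= y)%O.
Proof.
move=> xy; have /= := @ex_minimal (fun c => (x < c) && (c <= y))%O y.
rewrite xy lexx => /(_ isT) [c /andP[xc cy] cmin]; exists c => //.
rewrite /covers_in !in_setT xc; apply/existsP => -[z /and3P[_ xz zc]].
by have := cmin z; rewrite xz (le_trans (ltW zc) cy) zc => /(_ isT).
Qed.

Lemma cover_below x y : (x < y)%O -> exists2 c, (x <= c)%O & covers_in setT c y.
Proof.
move=> xy; have /= := @ex_maximal (fun c => (x <= c) && (c < y))%O x.
rewrite xy lexx => /(_ isT) [c /andP[xc cy] cmax]; exists c => //.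
rewrite /covers_in !in_setT cy; apply/existsP => -[z /and3P[_ cz zy]].
by have := cmax z; rewrite zy (le_trans xc (ltW cz)) cz => /(_ isT).
Qed.

Definition is_chain C : bool := [forall y in C, forall z in C, (y >=< z)%O].

Lemma is_chainP C : reflect {in C &, forall y z, (y >=< z)%O} (is_chain C).
Proof.
apply: (iffP forallP) => [h y z yC zC|h y]; last first.
  by apply/implyP => yC; apply/forall_inP => z; apply: h.
by have /implyP/(_ yC)/forall_inP := h y; apply.
Qed.

Lemma chain_least C x : is_chain C -> x \in C ->
  exists2 m, m \in C & forall y, y \in C -> (m <= y)%O.
Proof.
move=> /is_chainP ch xC; have [m mC mmin] := @ex_minimal (mem C) x xC.
exists m => // y yC; have := mmin y yC.
by case: (comparable_ltgtP (ch _ _ mC yC)).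
Qed.

Lemma sum_chain_pow2 S : is_chain S ->
  \sum_(x in S) 2 ^ (#|[set y in S | (x < y)%O]|).-1 = (2 ^ #|S|)./2.
Proof.
move hS: #|S| => n; elim: n S hS => [|n IH] S hS ch.
  by rewrite (cards0_eq hS) big_set0.
have [x0 x0S] : exists x, x \in S by apply/set0Pn; rewrite -card_gt0 hS.
have [m mS mle] := chain_least ch x0S.
have above_m : [set y in S | (m < y)%O] = S :\ m.
  apply/setP => y; rewrite !inE lt_def; case: (boolP (y \in S)) => [yS|]; rewrite ?andbF //.
  by rewrite mle // andbT andbC.
have hSm : #|S :\ m| = n by move: hS; rewrite (cardsD1 m) mS add1n => -[].
have chm : is_chain (S :\ m).
  by apply/is_chainP => y z /setD1P[_ yS] /setD1P[_ zS]; apply: (is_chainP _ ch).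
rewrite (bigD1 m) //= above_m hSm.
rewrite (eq_big (mem (S :\ m)) (fun i => 2 ^ (#|[set y in S :\ m | (i < y)%O]|).-1)).
- rewrite IH //; case: n {IH hS hSm} => [|n] //=.
  by rewrite !expnS !mul2n !doubleK addnn.
- by move=> i; rewrite !inE andbC.
move=> i /andP[iS _].
suff -> : [set y in S | (i < y)%O] = [set y in S :\ m | (i < y)%O] by [].
apply/setP => y; rewrite !inE.
by case: eqP => [->|] //=; rewrite (le_gtF (mle _ iS)) andbF.
Qed.

Definition chain_pred C x : option P :=
  [pick y in C | (y < x)%O && [forall z in C, ~~ ((y < z) && (z < x))%O]].

Lemma chain_predP C x p : chain_pred C x = Some p ->
  [/\ p \in C, (p < x)%O & forall z, z \in C -> ~~ ((p < z) && (z < x))%O].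
Proof.
rewrite /chain_pred; case: pickP => // q /andP[qC /andP[qx /forall_inP hq]] [<-].
by split.
Qed.

Lemma chain_pred_min C m : (forall y, y \in C -> (m <= y)%O) -> chain_pred C m = None.
Proof.
move=> mmin; case e: chain_pred => [p|] //.
by have [/mmin mp /lt_geF pm _] := chain_predP e; rewrite pm in mp.
Qed.

Definition chain_shift C x : option P := if x \in C then chain_pred C x else Some x.

Section Chain.
Variable C : {set P}.
Hypothesis chC : is_chain C.

Lemma chain_predE x p : p \in C -> (p < x)%O ->
  (forall z, z \in C -> ~~ ((p < z) && (z < x))%O) -> chain_pred C x = Some p.
Proof.
move=> pC px pnext; rewrite /chain_pred; case: pickP => [q|/(_ p)]; last first.
  by rewrite pC px /=; move/negP; case; apply/forall_inP.
case/andP=> qC /andP[qx /forall_inP qnext]; congr Some.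
case: (comparable_ltgtP (is_chainP _ chC _ _ qC pC)) => // [qp|pq].
  by have := qnext p pC; rewrite qp px.
by have := pnext q qC; rewrite pq qx.
Qed.

Lemma chain_pred_exists x y : y \in C -> (y < x)%O -> exists p, chain_pred C x = Some p.
Proof.
move=> yC yx; have /= := @ex_maximal (fun p => (p \in C) && (p < x)%O) y.
rewrite yC yx => /(_ isT) [p /andP[pC px] pmax]; exists p.
apply: chain_predE => // z zC; apply/negP => /andP[pz zx].
by have := pmax z; rewrite zC zx pz => /(_ isT).
Qed.

Lemma chain_pred_none x y : chain_pred C x = None -> y \in C -> (y < x)%O = false.
Proof.
move=> hx yC; apply/negbTE/negP => yx.
by have [p] := chain_pred_exists yC yx; rewrite hx.
Qed.

Lemma chain_pred_inj x y p : x \in C -> y \in C ->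
  chain_pred C x = Some p -> chain_pred C y = Some p -> x = y.
Proof.
move=> xC yC /chain_predP[_ px pxnext] /chain_predP[_ py pynext].
case: (comparable_ltgtP (is_chainP _ chC _ _ xC yC)) => // [xy|yx].
  by have := pynext x xC; rewrite px xy.
by have := pxnext y yC; rewrite py yx.
Qed.

Lemma chain_succ_exists y z : y \in C -> z \in C -> (y < z)%O ->
  exists2 s, s \in C & chain_pred C s = Some y.
Proof.
move=> yC zC yz; have /= := @ex_minimal (fun s => (s \in C) && (y < s)%O) z.
rewrite zC yz => /(_ isT) [s /andP[sC ys] smin]; exists s => //.
apply: chain_predE => // t tC; apply/negP => /andP[yt ts].
by have := smin t; rewrite tC yt ts => /(_ isT).
Qed.

Lemma chain_shift_inj : injective (chain_shift C).
Proof.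
have shift_out x y : y \notin C -> chain_pred C x <> Some y.
  by move=> yC /chain_predP[yC' _ _]; rewrite yC' in yC.
move=> x y; rewrite /chain_shift.
case: (boolP (x \in C)) => xC; case: (boolP (y \in C)) => yC; last by case.
- case ex: (chain_pred C x) => [p|]; case ey: (chain_pred C y) => [q|] //.
    by case=> pq; rewrite pq in ex; apply: chain_pred_inj ex ey.
  move=> _; case: (comparable_ltgtP (is_chainP _ chC _ _ xC yC)) => // lt.
    by rewrite (chain_pred_none ey xC) in lt.
  by rewrite (chain_pred_none ex yC) in lt.
- by move/(shift_out _ _ yC).
- by move/esym/(shift_out _ _ xC).
Qed.

End Chain.

Lemma rooted_tree_covers_uniq : is_rooted_tree (P := P) ->
  forall x y1 y2 : P, covers_in setT x y1 -> covers_in setT x y2 -> y1 = y2.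
Proof.
case/and3P=> _ _ /forallP covers_uniq x y1 y2 h1 h2.
by apply/eqP; move/forallP/(_ y1)/forallP/(_ y2): (covers_uniq x); rewrite h1 h2.
Qed.

Section Tree.
Hypothesis covers_uniq :
  forall x y1 y2 : P, covers_in setT x y1 -> covers_in setT x y2 -> y1 = y2.

Lemma comparable_above x y z : (x <= y)%O -> (x <= z)%O -> (y >=< z)%O.
Proof.
move hn: #|[set u | (x < u)%O]| => n; elim/ltn_ind: n x hn => n IH x hn.
rewrite le_eqVlt => /orP[/eqP<-|xy]; first by move/le_comparable.
rewrite le_eqVlt => /orP[/eqP<-|xz]; first by move/ltW/ge_comparable: xy.
have [c xc cy] := cover_above xy; have [c' xc' c'z] := cover_above xz.
move: c'z; rewrite -(covers_uniq xc xc') => cz.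
have /card_above_lt : (x < c)%O by case/and4P: xc.
by rewrite hn => /IH; apply.
Qed.

Lemma covers_in_uniq S x y1 y2 : covers_in S x y1 -> covers_in S x y2 -> y1 = y2.
Proof.
move=> /and4P[_ y1S xy1 /existsP n1] /and4P[_ y2S xy2 /existsP n2].
case: (comparable_ltgtP (comparable_above (ltW xy1) (ltW xy2))) => // lt.
  by case: n2; exists y1; rewrite y1S xy1 lt.
by case: n1; exists y2; rewrite y2S xy2 lt.
Qed.

Lemma rooted_tree_on_connected S : S != set0 ->
  {in S &, forall x y, connect (comp_rel_in S) x y} -> is_rooted_tree_on S.
Proof.
move=> S0 Sconn; apply/and3P; split => //.
  by apply/forall_inP => x xS; apply/forall_inP => y yS; apply: Sconn.
apply/forallP => x; apply/forallP => y1; apply/forallP => y2.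
by apply/implyP => h1; apply/implyP => h2; rewrite (covers_in_uniq h1 h2).
Qed.

Lemma rooted_tree_on_chain S : S != set0 -> is_chain S -> is_rooted_tree_on S.
Proof.
move=> S0 /is_chainP ch; apply: rooted_tree_on_connected => // x y xS yS.
by apply: connect1; rewrite /comp_rel_in xS yS ch.
Qed.

Lemma rooted_tree_onU S1 S2 z : is_rooted_tree_on S1 -> is_rooted_tree_on S2 ->
  z \in S1 -> z \in S2 -> is_rooted_tree_on (S1 :|: S2).
Proof.
move=> /and3P[_ /forall_inP c1 _] /and3P[_ /forall_inP c2 _] z1 z2.
apply: rooted_tree_on_connected; first by apply/set0Pn; exists z; rewrite inE z1.
have sub_conn S x y : S \subset S1 :|: S2 -> connect (comp_rel_in S) x y ->
    connect (comp_rel_in (S1 :|: S2)) x y.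
  move=> sS; apply: connect_sub => u v /and3P[uS vS uv]; apply: connect1.
  by rewrite /comp_rel_in (subsetP sS _ uS) (subsetP sS _ vS).
have conn_z x : x \in S1 :|: S2 -> connect (comp_rel_in (S1 :|: S2)) x z /\
    connect (comp_rel_in (S1 :|: S2)) z x.
  case/setUP => [xS|xS].
    by split; apply: (sub_conn S1 _ _ (subsetUl _ _));
      [exact: forall_inP (c1 _ xS) _ z1 | exact: forall_inP (c1 _ z1) _ xS].
  by split; apply: (sub_conn S2 _ _ (subsetUr _ _));
    [exact: forall_inP (c2 _ xS) _ z2 | exact: forall_inP (c2 _ z2) _ xS].
move=> x y /conn_z[xz _] /conn_z[_ zy]; exact: connect_trans xz zy.
Qed.

End Tree.

Lemma eq_Lsucc f g : f =1 g -> Lsucc f =1 Lsucc g.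
Proof.
move=> fg x; rewrite /Lsucc; congr odflt; apply: eq_pick => y /=.
by congr (_ && _); apply: eq_forallb => z; rewrite !fg.
Qed.

Lemma eq_promotion f g : f =1 g -> promotion f =1 promotion g.
Proof.
move=> fg x; have Lfg := eq_Lsucc fg; rewrite /promotion.
have -> : promotion_chain f = promotion_chain g.
  rewrite /promotion_chain (eq_pick (Q := fun x => g x == 1)) => [|y]; last by rewrite /= fg.
  case: pick => // v; apply: eq_imset => i; elim: (nat_of_ord i) => //= j ->; exact: Lfg.
by rewrite Lfg !fg.
Qed.

Section Top.
Variable r : P.
Hypothesis le_top : forall y, (y <= r)%O.

Lemma lt_top x : x != r -> (x < r)%O.
Proof. by move=> xr; rewrite lt_neqAle xr le_top. Qed.

Lemma top_ltF y : (r < y)%O = false.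
Proof. exact/le_gtF/le_top. Qed.

Lemma is_maximal_top x : is_maximal x = (x == r).
Proof.
apply/forallP/eqP => [xmax|-> y]; last by rewrite top_ltF.
by apply/eqP/negPn/negP => /lt_top xr; have := xmax r; rewrite xr.
Qed.

Lemma chain_succ_exists_top C y : is_chain C -> r \in C -> y \in C -> y != r ->
  exists2 s, s \in C & chain_pred C s = Some y.
Proof. by move=> chC rC yC /lt_top; apply: chain_succ_exists. Qed.

Definition chain_min C : P := odflt r [pick x in C | [forall y in C, x <= y]%O].

Lemma chain_minP C x : is_chain C -> x \in C ->
  chain_min C \in C /\ forall y, y \in C -> (chain_min C <= y)%O.
Proof.
move=> chC xC; rewrite /chain_min; case: pickP => [m /andP[mC /forall_inP]|] //.
have [m mC mle] := chain_least chC xC.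
by move/(_ m); rewrite mC; move/negP; case; apply/forall_inP.
Qed.

Section Successor.
Variable f : P -> nat.

Lemma Lsucc_top : Lsucc f r = r.
Proof. by rewrite /Lsucc; case: pickP => // y /andP[]; rewrite top_ltF. Qed.

Lemma LsuccE x s : injective f -> (x < s)%O ->
  (forall z, (x < z)%O -> f s <= f z) -> Lsucc f x = s.
Proof.
move=> finj xs smin; rewrite /Lsucc; case: pickP => [y /andP[xy /forallP ymin]|/(_ s)] /=.
  by apply: finj; apply/eqP; rewrite eqn_leq smin // (implyP (ymin s)).
by rewrite xs /=; move/negP; case; apply/forallP => z; apply/implyP/smin.
Qed.

Lemma Lsucc_spec x : x != r ->
  (x < Lsucc f x)%O /\ forall z, (x < z)%O -> f (Lsucc f x) <= f z.
Proof.
move=> /lt_top xr; have [m xm mmin] := arg_minnP f xr.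
rewrite /Lsucc; case: pickP => [y /andP[xy /forallP ymin]|/(_ m)] /=.
  by split=> // z xz; apply: (implyP (ymin z)).
by rewrite xm /=; move/negP; case; apply/forallP => z; apply/implyP/mmin.
Qed.

Lemma le_Lsucc x : (x <= Lsucc f x)%O.
Proof.
have [->|xr] := eqVneq x r; first by rewrite Lsucc_top.
by have [/ltW] := Lsucc_spec xr.
Qed.

Definition succ_path v i := iter i (Lsucc f) v.

Lemma succ_pathS v i : succ_path v i.+1 = Lsucc f (succ_path v i).
Proof. by []. Qed.

Lemma succ_path_mono v : {homo succ_path v : i j / i <= j >-> (i <= j)%O}.
Proof.
move=> i j; elim: j => [|j IH]; first by rewrite leqn0 => /eqP->.
rewrite leq_eqVlt => /orP[/eqP->//|/IH ij].
by rewrite succ_pathS (le_trans ij (le_Lsucc _)).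
Qed.

Lemma succ_path_stop v i j : succ_path v i = r -> succ_path v (j + i) = r.
Proof. by move=> h; elim: j => // j IH; rewrite addSn succ_pathS IH Lsucc_top. Qed.

Lemma card_above_succ_path v i : succ_path v i != r ->
  #|[set z | (succ_path v i < z)%O]| + i < #|P|.
Proof.
elim: i => [|i IH] hi.
  rewrite addn0 -cardsT; apply: proper_card; apply/properP; split => //.
  by exists v; rewrite ?inE ?ltxx.
have hi' : succ_path v i != r.
  by apply: contra hi => /eqP h; rewrite succ_pathS h Lsucc_top.
have [lt1 _] := Lsucc_spec hi'.
apply: leq_ltn_trans (IH hi'); rewrite addnS -addSn leq_add2r.
exact: card_above_lt.
Qed.

Lemma succ_path_end v i : #|P|.-1 <= i -> succ_path v i = r.
Proof.
move=> hi; rewrite -(subnK hi); apply: succ_path_stop.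
apply/eqP/negPn/negP => pr; have := card_above_succ_path pr.
have : 0 < #|[set z | (succ_path v #|P|.-1 < z)%O]|.
  by apply/card_gt0P; exists r; rewrite inE lt_top.
lia.
Qed.

End Successor.

Section Labeling.
Variable L : P -> nat.
Hypothesis L_inj : injective L.
Hypothesis L_range : forall x, 1 <= L x <= #|P|.
Hypothesis L_top : L r = #|P|.

Lemma L_lt_top x : x != r -> L x < #|P|.
Proof.
move=> xr; have /andP[_] := L_range x; rewrite leq_eqVlt -L_top => /orP[/eqP|//].
by move/L_inj => xr'; rewrite xr' eqxx in xr.
Qed.

Lemma golden_lt x y : golden L x -> (x < y)%O -> L x < L y.
Proof. by move=> /forallP/(_ y)/implyP. Qed.

Lemma golden_top : golden L r.
Proof. by apply/forallP => y; rewrite top_ltF. Qed.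

Definition goldens : {set P} := [set x | golden L x].

Definition golden_chains : {set {set P}} :=
  [set C : {set P} | [&& C \subset goldens, r \in C & is_chain C]].

(* The preimage of L under promotion with promotion chain C. *)
Definition unpromote C x : nat := if chain_shift C x is Some p then (L p).+1 else 1.

Section PromotionChain.
Variables (f : P -> nat) (v : P).
Hypothesis f_inj : injective f.
Hypothesis f_pos : forall x, 0 < f x.
Hypothesis f_v : f v = 1.
Hypothesis promotion_f : forall x, promotion f x = L x.

Local Notation C := (promotion_chain f).

Lemma promotion_chainE : C = [set succ_path f v i | i : 'I_#|P|].
Proof.
rewrite /promotion_chain; case: pickP => [v' /eqP fv'|/(_ v)]; last by rewrite f_v.
by rewrite (f_inj (etrans fv' (esym f_v))).
Qed.

Lemma succ_path_in_promotion_chain i : succ_path f v i \in C.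
Proof.
have n_gt0 : 0 < #|P| by apply/card_gt0P; exists r.
rewrite promotion_chainE; case: (ltnP i #|P|) => hi.
  by apply/imsetP; exists (Ordinal hi).
have hp : #|P|.-1 < #|P| by rewrite ltn_predL.
by apply/imsetP; exists (Ordinal hp); rewrite //= !succ_path_end //; lia.
Qed.

Lemma mem_promotion_chain x : x \in C -> exists i, x = succ_path f v i.
Proof. by rewrite promotion_chainE => /imsetP[i _ ->]; exists i. Qed.

Lemma promotion_chain_is_chain : is_chain C.
Proof.
apply/is_chainP => x y /mem_promotion_chain[i ->] /mem_promotion_chain[j ->].
case: (leqP i j) => [|/ltnW] /(succ_path_mono f v); first exact: le_comparable.
exact: ge_comparable.
Qed.

Lemma L_promotion_chain x : x \in C -> x != r -> L x = (f (Lsucc f x)).-1.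
Proof. by move=> xC xr; rewrite -promotion_f /promotion xC is_maximal_top (negbTE xr). Qed.

Lemma L_promotion_chainN x : x \notin C -> L x = (f x).-1.
Proof. by move=> xC; rewrite -promotion_f /promotion (negbTE xC). Qed.

Lemma golden_promotion_chain x : x \in C -> golden L x.
Proof.
move=> xC; have [->|xr] := eqVneq x r; first exact: golden_top.
have [i xi] := mem_promotion_chain xC.
have [x_s s_min] := Lsucc_spec f xr.
(* Off r, L y = f (g y) - 1 with y <= g y, whereas f (Lsucc f x) is least above x. *)
pose g y := if y \in C then Lsucc f y else y.
have L_g y : y != r -> L y = (f (g y)).-1.
  rewrite /g; case: ifP => [yC|/negbT yC] yr; first exact: L_promotion_chain.
  exact: L_promotion_chainN.
apply/forallP => y; apply/implyP => xy; have [->|yr] := eqVneq y r.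
  by rewrite L_top L_lt_top.
have s_neq_g : Lsucc f x != g y.
  rewrite /g; case: ifPn => [yC|yC]; last first.
    by apply: contraNneq yC => <-; rewrite xi -succ_pathS succ_path_in_promotion_chain.
  have [j yj] := mem_promotion_chain yC.
  have ij : i < j.
    by rewrite ltnNge; apply: contraTN xy => /(succ_path_mono f v); rewrite xi yj => /le_gtF ->.
  have [y_s _] := Lsucc_spec f yr.
  have : (Lsucc f x <= y)%O by rewrite xi yj -succ_pathS succ_path_mono.
  by move=> /le_lt_trans/(_ y_s)/lt_eqF ->.
have x_g : (x < g y)%O by rewrite /g; case: ifP => // _; apply: lt_le_trans xy (le_Lsucc _ _).
have : f (Lsucc f x) < f (g y).
  by rewrite ltn_neqAle s_min // andbT; apply: contra s_neq_g => /eqP/f_inj ->.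
by rewrite (L_g y yr) (L_promotion_chain xC xr); have := f_pos (Lsucc f x); lia.
Qed.

Lemma promotion_chain_golden : C \in golden_chains.
Proof.
rewrite inE promotion_chain_is_chain andbT -(succ_path_end f v (leqnn _)).
rewrite succ_path_in_promotion_chain andbT.
by apply/subsetP => x xC; rewrite inE golden_promotion_chain.
Qed.

Lemma chain_pred_succ_path i : succ_path f v i != r ->
  chain_pred C (succ_path f v i.+1) = Some (succ_path f v i).
Proof.
move=> ir; have [i_s _] := Lsucc_spec f ir.
apply: chain_predE; rewrite ?promotion_chain_is_chain ?succ_path_in_promotion_chain //.
move=> z /mem_promotion_chain[l ->]; apply/negP => /andP[il li].
case: (leqP l i) => [/(succ_path_mono f v)/le_gtF|/(succ_path_mono f v)/le_gtF].
  by rewrite il.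
by rewrite li.
Qed.

Lemma unpromote_promotion_chain : unpromote C =1 f.
Proof.
move=> x; rewrite /unpromote /chain_shift; case: ifPn => [xC|xC]; last first.
  by rewrite (L_promotion_chainN xC); have := f_pos x; lia.
have [i ->] := mem_promotion_chain xC; elim: i => [|i IH].
  by rewrite chain_pred_min // => y /mem_promotion_chain[j ->]; apply: succ_path_mono.
have [ir|ir] := eqVneq (succ_path f v i) r.
  by rewrite succ_pathS ir Lsucc_top -ir.
rewrite chain_pred_succ_path // (L_promotion_chain _ ir) ?succ_path_in_promotion_chain //.
by have := f_pos (succ_path f v i.+1); rewrite succ_pathS; lia.
Qed.

End PromotionChain.

Lemma mem_unpromote C x : (x \in C) = (unpromote C x != (L x).+1).
Proof.
rewrite /unpromote /chain_shift; case: ifPn => [xC|_]; last by rewrite eqxx.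
case e: chain_pred => [p|]; last by rewrite eqSS eq_sym -lt0n; case/andP: (L_range x).
rewrite eqSS; apply/esym/negP => /eqP/L_inj px.
by have [_] := chain_predP e; rewrite px ltxx.
Qed.

Section GoldenChain.
Variable C : {set P}.
Hypothesis C_golden : C \in golden_chains.

Lemma golden_chain_golden x : x \in C -> golden L x.
Proof. by move: C_golden; rewrite inE => /and3P[/subsetP sub _ _] /sub; rewrite inE. Qed.

Lemma top_in_golden_chain : r \in C.
Proof. by move: C_golden; rewrite inE => /and3P[]. Qed.

Lemma golden_chain_is_chain : is_chain C.
Proof. by move: C_golden; rewrite inE => /and3P[]. Qed.

Lemma unpromote_pos x : 0 < unpromote C x.
Proof. by rewrite /unpromote; case: chain_shift. Qed.

Lemma unpromote_le x : unpromote C x <= #|P|.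
Proof.
rewrite /unpromote /chain_shift; case: ifPn => [xC|xC].
  case e: chain_pred => [p|]; last by apply/card_gt0P; exists r.
  have [_ px _] := chain_predP e.
  exact/L_lt_top/negbT/lt_eqF/(lt_le_trans px).
by apply: L_lt_top; apply: contraNneq xC => ->; apply: top_in_golden_chain.
Qed.

Lemma unpromote_inj : injective (unpromote C).
Proof.
have L_pos x : (L x).+1 != 1 by rewrite eqSS -lt0n; case/andP: (L_range x).
move=> x y; rewrite /unpromote.
case ex: chain_shift => [p|]; case ey: chain_shift => [q|].
- by move=> [/L_inj pq]; apply: (chain_shift_inj golden_chain_is_chain); rewrite ex ey pq.
- by move/eqP; rewrite (negbTE (L_pos _)).
- by move/esym/eqP; rewrite (negbTE (L_pos _)).
- by move=> _; apply: (chain_shift_inj golden_chain_is_chain); rewrite ex ey.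
Qed.

Lemma Lsucc_unpromote y s : s \in C -> chain_pred C s = Some y ->
  Lsucc (unpromote C) y = s.
Proof.
move=> sC hs; have [yC ys _] := chain_predP hs; have chC := golden_chain_is_chain.
apply: LsuccE => [|//|z yz]; first exact: unpromote_inj.
have gy := golden_chain_golden yC.
rewrite {1}/unpromote /chain_shift sC hs /unpromote /chain_shift.
case: ifPn => [zC|_]; last exact/ltnW/golden_lt.
have [q hq] := chain_pred_exists chC yC yz; have [qC qz qnext] := chain_predP hq.
rewrite hq ltnS; case: (comparable_ltgtP (is_chainP _ chC _ _ qC yC)) => [qy|yq|->] //.
  by have := qnext y yC; rewrite qy yz.
exact/ltnW/golden_lt.
Qed.

Lemma succ_path_unpromote_in m i : m \in C -> succ_path (unpromote C) m i \in C.
Proof.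
move=> mC; elim: i => // i IH; have [ir|ir] := eqVneq (succ_path (unpromote C) m i) r.
  by rewrite succ_pathS ir Lsucc_top top_in_golden_chain.
have [s sC hs] := chain_succ_exists_top golden_chain_is_chain top_in_golden_chain IH ir.
by rewrite succ_pathS (Lsucc_unpromote sC hs).
Qed.

Lemma golden_chain_succ_path m c : m \in C -> chain_pred C m = None -> c \in C ->
  c = succ_path (unpromote C) m #|[set y in C | (y < c)%O]|.
Proof.
move=> mC hm; have chC := golden_chain_is_chain.
move hj: #|_| => j; elim: j c hj => [|j IH] c hj cC.
  case: (comparable_ltgtP (is_chainP _ chC _ _ cC mC)) => // [|mc].
    by rewrite (chain_pred_none chC hm cC).
  by move/cards0_eq/setP/(_ m): hj; rewrite !inE mC mc.
have [y0] : exists y, y \in [set y in C | (y < c)%O] by apply/set0Pn; rewrite -card_gt0 hj.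
rewrite inE => /andP[y0C y0c]; have [p hp] := chain_pred_exists chC y0C y0c.
have [pC pc pnext] := chain_predP hp.
have below_c : [set y in C | (y < c)%O] = p |: [set y in C | (y < p)%O].
  apply/setP => y; rewrite !inE; case: (eqVneq y p) => [->|yp] /=; first by rewrite pC pc.
  apply/andP/andP => -[yC]; last by move/lt_trans/(_ pc).
  case: (comparable_ltgtP (is_chainP _ chC _ _ yC pC)) => [//|py yc|/eqP];
    last by rewrite (negbTE yp).
  by have := pnext y yC; rewrite py yc.
move: hj; rewrite below_c cardsU1 inE ltxx andbF add1n => -[/IH/(_ pC) pj].
by rewrite succ_pathS -pj (Lsucc_unpromote cC hp).
Qed.

Lemma promotion_chain_unpromote : promotion_chain (unpromote C) = C.
Proof.
have [m mC mmin] := chain_least golden_chain_is_chain top_in_golden_chain.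
have hm := chain_pred_min mmin.
have um : unpromote C m = 1 by rewrite /unpromote /chain_shift mC hm.
rewrite /promotion_chain; case: pickP => [v /eqP uv|/(_ m)]; last by rewrite um.
rewrite (unpromote_inj (etrans uv (esym um))).
apply/setP => c; apply/imsetP/idP => [[i _ ->]|cC]; first exact: succ_path_unpromote_in.
have hb : #|[set y in C | (y < c)%O]| < #|P|.
  rewrite -cardsT; apply: proper_card; apply/properP; split; first exact: subsetT.
  by exists c; rewrite ?inE ?ltxx ?andbF.
by exists (Ordinal hb) => //; apply: golden_chain_succ_path.
Qed.

Lemma promotion_unpromote x : promotion (unpromote C) x = L x.
Proof.
rewrite /promotion promotion_chain_unpromote is_maximal_top.
case: (boolP (x \in C)) => xC; last by rewrite /unpromote /chain_shift (negbTE xC).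
have [->|xr] := eqVneq x r; first by rewrite L_top.
have [s sC hs] := chain_succ_exists_top golden_chain_is_chain top_in_golden_chain xC xr.
by rewrite (Lsucc_unpromote sC hs) /unpromote /chain_shift sC hs.
Qed.

End GoldenChain.

Definition unpromote_ffun C : {ffun P -> 'I_#|P|.+1} := [ffun x => inord (unpromote C x)].

Lemma unpromote_ffunE C : C \in golden_chains ->
  forall x, nat_of_ord (unpromote_ffun C x) = unpromote C x.
Proof. by move=> CG x; rewrite ffunE inordK // ltnS unpromote_le. Qed.

Lemma unpromote_ffun_preimage C : C \in golden_chains ->
  unpromote_ffun C \in labelings /\
  forall x, promotion (fun y => nat_of_ord (unpromote_ffun C y)) x = L x.
Proof.
move=> CG; split.
  rewrite inE; apply/andP; split.
    apply/injectiveP => x y /(congr1 val).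
    by rewrite /= !unpromote_ffunE // => /(unpromote_inj CG).
  by apply/forallP => x; rewrite unpromote_ffunE // unpromote_pos.
by move=> x; rewrite (eq_promotion (unpromote_ffunE CG)) promotion_unpromote.
Qed.

Lemma preimage_unpromote_ffun (L' : {ffun P -> 'I_#|P|.+1}) : L' \in labelings ->
  (forall x, promotion (fun y => nat_of_ord (L' y)) x = L x) ->
  exists2 C, C \in golden_chains & L' = unpromote_ffun C.
Proof.
rewrite inE => /andP[/injectiveP L'_inj /forallP L'_pos] promotion_L'.
pose f y := nat_of_ord (L' y).
have f_inj : injective f by move=> x y /val_inj/L'_inj.
have [v fv] : exists v, f v = 1.
  apply: labeling_onto => // [x|]; first by rewrite L'_pos -ltnS ltn_ord.
  by apply/andP; split => //; apply/card_gt0P; exists r.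
have CG := promotion_chain_golden f_inj L'_pos fv promotion_L'.
exists (promotion_chain f) => //; apply/ffunP => x; apply: val_inj.
by rewrite /= unpromote_ffunE // (unpromote_promotion_chain f_inj L'_pos fv promotion_L').
Qed.

Lemma unpromote_ffun_inj : {in golden_chains &, injective unpromote_ffun}.
Proof.
move=> C1 C2 C1G C2G e; apply/(@setP P) => x.
have := congr1 (fun g : {ffun P -> 'I_#|P|.+1} => nat_of_ord (g x)) e.
by rewrite /= !unpromote_ffunE // !mem_unpromote => ->.
Qed.

Lemma promotion_preimage_card_golden_chains : promotion_preimage_card L = #|golden_chains|.
Proof.
rewrite /promotion_preimage_card -(card_in_imset unpromote_ffun_inj).
apply: eq_card => L'; rewrite inE; apply/andP/imsetP => [[L'lab /forallP/(_ _)/eqP]|[C CG ->]].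
  by case/(preimage_unpromote_ffun L'lab) => C; exists C.
by have [? h] := unpromote_ffun_preimage CG; split => //; apply/forallP => x; rewrite h.
Qed.

Section Counting.
Hypothesis covers_uniq :
  forall x y1 y2 : P, covers_in setT x y1 -> covers_in setT x y2 -> y1 = y2.

Definition golden_above x : {set P} := [set y | golden L y & (x < y)%O].

Lemma golden_chains_min x : golden L x ->
  [set C in golden_chains | chain_min C == x] =
  (fun D => x |: (r |: D)) @: powerset (golden_above x :\ r).
Proof.
move=> gx; apply/setP => C; rewrite inE; apply/andP/imsetP => [[CG /eqP Cx]|[D]].
  have [xC xmin] := chain_minP (golden_chain_is_chain CG) (top_in_golden_chain CG).
  rewrite Cx in xC xmin; exists (C :\: [set x; r]).
    rewrite powersetE; apply/subsetP => y; rewrite !inE negb_or => /andP[/andP[yx ->] yC].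
    by rewrite (golden_chain_golden CG yC) lt_def yx xmin.
  apply/setP => y; rewrite !inE; have [->|_] := eqVneq y x => //=.
  by have [->|] := eqVneq y r; rewrite ?(top_in_golden_chain CG).
rewrite powersetE => /subsetP Dsub ->.
have Dx y : y \in D -> golden L y /\ (x < y)%O.
  by move/Dsub; rewrite !inE => /and3P[_ -> ->].
have xle y : y \in x |: (r |: D) -> (x <= y)%O.
  by rewrite !inE => /or3P[/eqP->|/eqP->|/Dx[_ /ltW]].
have CG : x |: (r |: D) \in golden_chains.
  rewrite inE setU1r ?setU11 //; apply/andP; split.
    apply/subsetP => y; rewrite !inE => /or3P[/eqP->|/eqP->|/Dx[]] //.
    exact: golden_top.
  by apply/is_chainP => y z /xle xy /xle xz; apply: comparable_above xy xz.
have [mC mmin] := chain_minP (golden_chain_is_chain CG) (top_in_golden_chain CG).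
by split => //; apply/eqP/le_anti; rewrite mmin ?setU11 // xle.
Qed.

Lemma card_golden_chains_min x : golden L x ->
  #|[set C in golden_chains | chain_min C == x]| = 2 ^ (#|golden_above x|).-1.
Proof.
move=> gx; rewrite golden_chains_min // card_in_imset; last first.
  move=> D1 D2; rewrite !powersetE => /subsetP D1sub /subsetP D2sub /setP e.
  apply/setP => y; have := e y; rewrite !inE.
  have [|yD] := boolP (y \in golden_above x :\ r); last first.
    by rewrite (contraNF (@D1sub y)) // (contraNF (@D2sub y)).
  by rewrite !inE => /andP[/negbTE -> /andP[_ /gt_eqF ->]].
rewrite card_powerset; congr (2 ^ _).
have [->|xr] := eqVneq x r.
  suff -> : golden_above r = set0 by rewrite set0D cards0.
  by apply/setP => y; rewrite !inE top_ltF andbF.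
by rewrite (cardsD1 r (golden_above x)) inE golden_top lt_top.
Qed.

Lemma card_golden_chains :
  #|golden_chains| = \sum_(x in goldens) 2 ^ (#|golden_above x|).-1.
Proof.
rewrite -sum1_card (partition_big chain_min (fun x => x \in goldens)); last first.
  move=> C CG; have [mC _] := chain_minP (golden_chain_is_chain CG) (top_in_golden_chain CG).
  by rewrite /goldens inE (golden_chain_golden CG mC).
apply: eq_bigr => x; rewrite /goldens inE => gx.
rewrite -(card_golden_chains_min gx) -sum1_card.
by apply: eq_bigl => C; rewrite inE.
Qed.

Section HighestBranch.
Variable b : P.
Hypothesis b_highest : is_highest_branch_vertex b.

Lemma highest_branch_cmp x : (b <= x)%O || (x < b)%O.
Proof.
move: b_highest; rewrite /is_highest_branch_vertex.
case: ifP => [_ /andP[_ /forallP b_max]|_ /forallP]; last by move->.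
apply/negPn/negP; rewrite negb_or => /andP[nbx nxb].
have xb : x != b by apply: contraNneq nbx => ->.
have /= := @ex_minimal (fun z => (x <= z) && (b <= z))%O r.
rewrite !le_top => /(_ isT) [z /andP[xz bz] zmin].
have xz' : (x < z)%O by rewrite lt_neqAle xz andbT; apply: contraNneq nbx => ->.
have bz' : (b < z)%O by rewrite lt_neqAle bz andbT; apply: contraNneq nxb => ->.
have [a xa az] := cover_below xz'; have [a' ba' a'z] := cover_below bz'.
have aa' : a != a'.
  apply/eqP => eq_aa'; have ba : (b <= a)%O by rewrite eq_aa'.
  by case/and4P: az => _ _ a_z _; have := zmin a; rewrite xa ba a_z => /(_ isT).
have : is_branch z.
  apply: (@leq_trans #|[set a; a']|); first by rewrite cards2 aa'.
  by apply: subset_leq_card; apply/subsetP => y; rewrite !inE => /orP[] /eqP->.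
by move/(implyP (b_max z)); rewrite (lt_geF bz').
Qed.

Definition golden_subtree S := (S \subset golden_below L b) && is_rooted_tree_on S.

Local Notation M := (maxGoldenSubtrees L b).

Lemma maxGoldenSubtreesP T :
  T \in M -> golden_subtree T /\ forall S, golden_subtree S -> T \subset S -> S = T.
Proof. by rewrite inE => /maxsetP. Qed.

Lemma maxGoldenSubtree_sub T : T \in M -> T \subset golden_below L b.
Proof. by case/maxGoldenSubtreesP => /andP[]. Qed.

Lemma golden_subtree1 x : x \in golden_below L b -> golden_subtree [set x].
Proof.
move=> xb; rewrite /golden_subtree sub1set xb (rooted_tree_on_chain covers_uniq) //.
  by apply/set0Pn; exists x; rewrite inE.
by apply/is_chainP => y z /set1P-> /set1P->; apply: comparablexx.
Qed.

Lemma maxGoldenSubtree_up T x y : T \in M -> x \in T ->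
  y \in golden_below L b -> (x <= y)%O -> y \in T.
Proof.
move=> TM xT yb xy; have [/andP[Tsub Ttree] Tmax] := maxGoldenSubtreesP TM.
suff <- : T :|: [set x; y] = T by rewrite !inE eqxx !orbT.
apply: Tmax; last exact: subsetUl.
rewrite /golden_subtree subUset Tsub; apply/andP; split.
  by rewrite subUset !sub1set yb (subsetP Tsub).
apply: (rooted_tree_onU covers_uniq (z := x)); rewrite ?setU11 //.
apply: (rooted_tree_on_chain covers_uniq); first by apply/set0Pn; exists x; rewrite setU11.
apply/is_chainP => u v /set2P[]-> /set2P[]->; rewrite ?comparablexx //.
  exact: le_comparable.
exact: ge_comparable.
Qed.

Lemma maxGoldenSubtree_eq T1 T2 x : T1 \in M -> T2 \in M -> x \in T1 -> x \in T2 -> T1 = T2.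
Proof.
move=> T1M T2M x1 x2.
have [/andP[s1 t1] m1] := maxGoldenSubtreesP T1M.
have [/andP[s2 t2] m2] := maxGoldenSubtreesP T2M.
have T12 : golden_subtree (T1 :|: T2).
  by rewrite /golden_subtree subUset s1 s2 (rooted_tree_onU covers_uniq t1 t2 x1 x2).
by rewrite -(m1 _ T12 (subsetUl _ _)) (m2 _ T12 (subsetUr _ _)).
Qed.

Lemma maxGoldenSubtrees_partition : partition M (golden_below L b).
Proof.
apply/and3P; split.
- apply/eqP/setP => x; apply/bigcupP/idP => [[T TM xT]|xb].
    exact: subsetP (maxGoldenSubtree_sub TM) _ xT.
  have [T TM] := maxset_exists (golden_subtree1 xb).
  by rewrite sub1set => xT; exists T; rewrite ?inE.
- apply/trivIsetP => T1 T2 T1M T2M T12; rewrite -setI_eq0.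
  apply: contraNT T12 => /set0Pn[x /setIP[x1 x2]].
  by rewrite (maxGoldenSubtree_eq T1M T2M x1 x2).
by apply/negP => /maxGoldenSubtreesP[/andP[_ /and3P[]]]; rewrite eqxx.
Qed.

Definition golden_branch_chain : {set P} := [set x | golden L x & (b <= x)%O].

Lemma goldens_split : goldens = golden_branch_chain :|: golden_below L b.
Proof.
apply/setP => x; rewrite !inE; case: (golden L x) => //=.
by case/orP: (highest_branch_cmp x) => [->|xb]; rewrite ?xb ?(lt_geF xb).
Qed.

Lemma golden_branch_chain_disjoint : [disjoint golden_branch_chain & golden_below L b].
Proof.
rewrite -setI_eq0; apply/eqP/setP => x; rewrite !inE.
by apply/negbTE/negP => /andP[/andP[_ bx] /andP[_]]; rewrite (le_gtF bx).
Qed.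

Lemma omega_maxGoldenSubtree T x : T \in M -> x \in T ->
  omega T x = #|[set y in golden_below L b | (x <= y)%O]|.
Proof.
move=> TM xT; apply: eq_card => y; rewrite !inE.
case: (boolP (x <= y)%O) => xy; rewrite ?andbF ?andbT //.
apply/idP/idP => [|yb]; last by apply: maxGoldenSubtree_up TM xT _ xy; rewrite inE.
by move/(subsetP (maxGoldenSubtree_sub TM)); rewrite inE.
Qed.

Lemma card_golden_above_below x : x \in golden_below L b ->
  #|[set y in golden_below L b | (x <= y)%O]| + #|golden_branch_chain| =
  #|golden_above x| + 1.
Proof.
rewrite inE => /andP[gx xb].
have golden_ge_x : [set y | golden L y & (x <= y)%O] = x |: golden_above x.
  apply/setP => y; rewrite !inE; have [->|yx] /= := eqVneq y x; first by rewrite gx lexx.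
  by rewrite lt_neqAle eq_sym yx.
have -> : #|golden_above x| + 1 = #|[set y | golden L y & (x <= y)%O]|.
  by rewrite golden_ge_x cardsU1 !inE ltxx andbF addn1.
rewrite -cardsUI.
have -> : [set y in golden_below L b | (x <= y)%O] :&: golden_branch_chain = set0.
  apply/setP => y; rewrite !inE.
  by apply/negbTE/negP => /andP[/andP[/andP[_ yb] _] /andP[_ b_y]]; rewrite (le_gtF b_y) in yb.
rewrite cards0 addn0; apply: eq_card => y; rewrite !inE.
case: (golden L y) => //=; case/orP: (highest_branch_cmp y) => [b_y|yb].
  by rewrite b_y (le_trans (ltW xb) b_y) orbT.
by rewrite yb (lt_geF yb) orbF.
Qed.

Lemma sum_golden_branch_chain :
  \sum_(x in golden_branch_chain) 2 ^ (#|golden_above x|).-1 =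
  2 ^ (#|golden_branch_chain|).-1.
Proof.
have chain : is_chain golden_branch_chain.
  apply/is_chainP => y z; rewrite !inE => /andP[_ b_y] /andP[_ b_z].
  exact: comparable_above b_y b_z.
have k_gt0 : 0 < #|golden_branch_chain|.
  by apply/card_gt0P; exists r; rewrite inE golden_top le_top.
have -> : 2 ^ (#|golden_branch_chain|).-1 = (2 ^ #|golden_branch_chain|)./2.
  by case: #|_| k_gt0 => // k _; rewrite expnS mul2n doubleK.
rewrite -sum_chain_pow2 //; apply: eq_bigr => x; rewrite inE => /andP[_ bx].
suff -> : golden_above x = [set y in golden_branch_chain | (x < y)%O] by [].
apply/setP => y; rewrite !inE.
by case: (boolP (x < y)%O) => xy; rewrite ?andbF // (le_trans bx (ltW xy)) !andbT.
Qed.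

Lemma sum_golden_below :
  \sum_(x in golden_below L b) 2 ^ (#|golden_above x|).-1 =
  \sum_(T in M) \sum_(x in T) 2 ^ (omega T x + #|golden_branch_chain| - 2).
Proof.
case/and3P: maxGoldenSubtrees_partition => /eqP coverM trivM _.
rewrite -coverM big_trivIset //; apply: eq_bigr => T TM; apply: eq_bigr => x xT.
have h := card_golden_above_below (subsetP (maxGoldenSubtree_sub TM) _ xT).
by rewrite (omega_maxGoldenSubtree TM xT) h addn1 subn2.
Qed.

Lemma sum_goldens :
  \sum_(x in goldens) 2 ^ (#|golden_above x|).-1 =
  2 ^ (#|golden_branch_chain|).-1 +
  \sum_(T in M) \sum_(x in T) 2 ^ (omega T x + #|golden_branch_chain| - 2).
Proof.
rewrite goldens_split (eq_bigl [predU golden_branch_chain & golden_below L b]).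
  by rewrite bigU ?golden_branch_chain_disjoint // sum_golden_branch_chain sum_golden_below.
by move=> x; rewrite in_setU.
Qed.

End HighestBranch.
End Counting.
End Labeling.
End Top.
End FinPoset.

Unset Implicit Arguments.

Theorem mainTheorem3 (d : Order.disp_t) (P : finPOrderType d)
    (L : P -> nat) (b : P) :
  is_rooted_tree (P := P) ->
  is_labeling L ->
  (forall x y : P, L x = #|P| -> (y <= x)%O) ->
  is_highest_branch_vertex b ->
  let k := #|[set x : P | golden L x & (b <= x)%O]| in
  promotion_preimage_card L =
    (2 ^ k.-1 +
     \sum_(T in maxGoldenSubtrees L b) \sum_(x in T) 2 ^ (omega T x + k - 2))%N.
Proof.
move=> P_tree [L_inj L_range] L_root b_highest k.
have covers_uniq := rooted_tree_covers_uniq P_tree.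
have [r L_r] : exists r, L r = #|P|.
  apply: labeling_onto => //; rewrite leqnn andbT.
  by case/and3P: P_tree => /set0Pn[x _] _ _; apply/card_gt0P; exists x.
have le_top y : (y <= r)%O by apply: L_root L_r.
rewrite (promotion_preimage_card_golden_chains le_top L_inj L_range L_r).
rewrite (card_golden_chains le_top L covers_uniq).
by rewrite (sum_goldens le_top L covers_uniq b_highest).
Qed.
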